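(* Let $(X,\tau,I)$ be a $*$-extremally disconnected ideal topological space and $\gamma$ an operation on $\tau$ such that $(X,\tau)$ is $\gamma$-regular. For $V\subseteq X$ the following are equivalent: (1) $V$ is $\gamma$-open; (2) $V$ is $\alpha$-$I$-open and locally closed; (3) $V$ is pre-$\gamma$-$I$-open and locally closed; (4) $V$ is pre-$I$-open and locally closed; (5) $V$ is semi-$I$-open and locally closed; (6) $V$ is $b$-$I$-open and locally closed.
   Context: Let $(X,\tau)$ be a topological space; $Cl$ and $Int$ denote closure and interior in $\tau$. An ideal on $X$ is a nonempty family $I$ of subsets of $X$ such that $A\in I$, $B\subseteq A$ imply $B\in I$, and $A,B\in I$ imply $A\cup B\in I$; $(X,\tau,I)$ is then called an ideal topological space. An operation on $\tau$ is a map $\gamma:\tau\to P(X)$ with $V\subseteq\gamma(V)$ for all $V\in\tau$. A subset $A\subseteq X$ is $\gamma$-open if for every $x\in A$ there is $U\in\tau$ with $x\in U$ and $\gamma(U)\subseteq A$; $\tau_\gamma$ denotes the family of $\gamma$-open sets (so $\tau_\gamma\subseteq\tau$), and complements of $\gamma$-open sets are $\gamma$-closed. $\tau_\gamma\text{-}Int(A)$ is the union of all $\gamma$-open sets contained in $A$, and $\tau_\gamma\text{-}Cl(A)$ is the intersection of all $\gamma$-closed sets containing $A$. The local function of $A$ is $A^*=\{x\in X: U\cap A\notin I \text{ for every } U\in\tau \text{ with } x\in U\}$, and $Cl^*(A)=A\cup A^*$ (the closure operator of a topology $\tau^*$ finer than $\tau$). A subset $A$ is pre-$\gamma$-$I$-open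 if $A\subseteq \tau_\gamma\text{-}Int(Cl^*(A))$. The space $(X,\tau)$ is $\gamma$-regular if for each $x\in X$ and each open $V$ containing $x$ there is an open $U$ containing $x$ with $\gamma(U)\subseteq V$ (equivalently, $\tau_\gamma=\tau$). $(X,\tau,I)$ is $*$-extremally disconnected if $Cl^*(V)$ is open for every open $V\subseteq X$ (equivalently, $Cl^*(Int(V))\subseteq Int(Cl^*(V))$ for every $V\subseteq X$). A set $A$ is: $\alpha$-$I$-open if $A\subseteq Int(Cl^*(Int(A)))$; pre-$I$-open if $A\subseteq Int(Cl^*(A))$; semi-$I$-open if $A\subseteq Cl^*(Int(A))$; $b$-$I$-open if $A\subseteq Int(Cl^*(A))\cup Cl^*(Int(A))$; locally closed if $A=U\cap K$ for some open $U$ and some closed $K$ in $(X,\tau)$. *)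

From Stdlib Require Import Classical.

Section Defs.
Variable X : Type.
Definition set := X -> Prop.

Definition subset (A B : set) : Prop := forall x, A x -> B x.
Definition set_eq (A B : set) : Prop := forall x, A x <-> B x.
Definition inter (A B : set) : set := fun x => A x /\ B x.
Definition union (A B : set) : set := fun x => A x \/ B x.
Definition compl (A : set) : set := fun x => ~ A x.
Definition empty : set := fun _ => False.
Definition full : set := fun _ => True.

Definition is_topology (tau : set -> Prop) : Prop :=
  tau empty /\ tau full /\
  (forall F : set -> Prop, (forall U, F U -> tau U) ->
      tau (fun x => exists U, F U /\ U x)) /\
  (forall U V, tau U -> tau V -> tau (inter U V)).

Definition is_ideal (I : set -> Prop) : Prop :=
  (exists A, I A) /\
  (forall A B, I A -> subset B A -> I B) /\
  (forall A B, I A -> I B -> I (union A B)).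

Definition is_operation (tau : set -> Prop) (gamma : set -> set) : Prop :=
  forall V, tau V -> subset V (gamma V).

Definition is_closed (tau : set -> Prop) (K : set) : Prop := tau (compl K).

Definition Int (tau : set -> Prop) (A : set) : set :=
  fun x => exists U, tau U /\ subset U A /\ U x.
Definition Cl (tau : set -> Prop) (A : set) : set :=
  fun x => forall K, is_closed tau K -> subset A K -> K x.

Definition gamma_open (tau : set -> Prop) (gamma : set -> set) (A : set) : Prop :=
  forall x, A x -> exists U, tau U /\ U x /\ subset (gamma U) A.

Definition gamma_Int (tau : set -> Prop) (gamma : set -> set) (A : set) : set :=
  fun x => exists U, gamma_open tau gamma U /\ subset U A /\ U x.

Definition local_fun (tau : set -> Prop) (I : set -> Prop) (A : set) : set :=
  fun x => forall U, tau U -> U x -> ~ I (inter U A).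

Definition Clstar (tau : set -> Prop) (I : set -> Prop) (A : set) : set :=
  union A (local_fun tau I A).

Definition pre_gamma_I_open tau I gamma (A : set) : Prop :=
  subset A (gamma_Int tau gamma (Clstar tau I A)).

Definition gamma_regular (tau : set -> Prop) (gamma : set -> set) : Prop :=
  forall x V, tau V -> V x -> exists U, tau U /\ U x /\ subset (gamma U) V.

Definition star_extremally_disconnected (tau : set -> Prop) (I : set -> Prop) : Prop :=
  forall V, tau V -> tau (Clstar tau I V).

Definition alpha_I_open tau I (A : set) : Prop :=
  subset A (Int tau (Clstar tau I (Int tau A))).
Definition pre_I_open tau I (A : set) : Prop :=
  subset A (Int tau (Clstar tau I A)).
Definition semi_I_open tau I (A : set) : Prop :=
  subset A (Clstar tau I (Int tau A)).
Definition b_I_open tau I (A : set) : Prop :=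
  subset A (union (Int tau (Clstar tau I A)) (Clstar tau I (Int tau A))).

Definition locally_closed (tau : set -> Prop) (A : set) : Prop :=
  exists U K, tau U /\ is_closed tau K /\ set_eq A (inter U K).
End Defs.

Arguments subset {X}. Arguments set_eq {X}. Arguments inter {X}.
Arguments union {X}. Arguments compl {X}. Arguments empty {X}. Arguments full {X}.
Arguments is_topology {X}. Arguments is_ideal {X}. Arguments is_operation {X}.
Arguments is_closed {X}. Arguments Int {X}. Arguments Cl {X}.
Arguments gamma_open {X}. Arguments gamma_Int {X}. Arguments local_fun {X}.
Arguments Clstar {X}. Arguments pre_gamma_I_open {X}. Arguments gamma_regular {X}.
Arguments star_extremally_disconnected {X}. Arguments alpha_I_open {X}.
Arguments pre_I_open {X}. Arguments semi_I_open {X}. Arguments b_I_open {X}.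
Arguments locally_closed {X}.

(* In a *-extremally disconnected space, [Cl*(Int A) ⊆ Int(Cl* A)], so each
   of the five generalized openness notions implies pre-I-openness; and a
   locally closed pre-I-open set [V = U ∩ K] is open, because [Cl* V ⊆ K]
   gives [V = U ∩ Int(Cl* V)].  Conversely open sets have all five
   properties, and under γ-regularity the γ-open sets are exactly the open
   sets. *)
From Stdlib Require Import Classical FunctionalExtensionality PropExtensionality.

Section IdealTopology.
Variable X : Type.
Variable tau : set X -> Prop.
Variable I : set X -> Prop.
Hypothesis Htop : is_topology tau.
Hypothesis Hid : is_ideal I.

Lemma open_of_nbhds (V : set X) :
  (forall x, V x -> exists U, tau U /\ U x /\ subset U V) -> tau V.
Proof.
  intros Hnbhd. destruct Htop as (_ & _ & Hunion & _).
  assert (HV : (fun x => exists U, (tau U /\ subset U V) /\ U x) = V).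
  { apply functional_extensionality; intro x; apply propositional_extensionality.
    split.
    - intros (U & (_ & sUV) & Ux). exact (sUV x Ux).
    - intros Vx. destruct (Hnbhd x Vx) as (U & tU & Ux & sUV). eauto. }
  rewrite <- HV. apply (Hunion (fun U => tau U /\ subset U V)). tauto.
Qed.

Lemma open_Int (A : set X) : tau (Int tau A).
Proof.
  apply open_of_nbhds. intros x (U & tU & sUA & Ux).
  exists U; repeat split; auto. intros y Uy. exists U; auto.
Qed.

Lemma Int_sub (A : set X) : subset (Int tau A) A.
Proof. intros x (U & _ & sUA & Ux). auto. Qed.

Lemma Int_mono (A B : set X) : subset A B -> subset (Int tau A) (Int tau B).
Proof.
  intros sAB x (U & tU & sUA & Ux). exists U; repeat split; auto.
  intros y Uy; auto.
Qed.

Lemma open_sub_Int (A : set X) : tau A -> subset A (Int tau A).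
Proof. intros tA x Ax. exists A; repeat split; auto. intros y Ay; exact Ay. Qed.

Lemma sub_Clstar (A : set X) : subset A (Clstar tau I A).
Proof. intros x Ax. left; exact Ax. Qed.

Lemma Clstar_mono (A B : set X) :
  subset A B -> subset (Clstar tau I A) (Clstar tau I B).
Proof.
  intros sAB x [Ax | HAx]; [left; auto | right].
  intros U tU Ux HUB. apply (HAx U tU Ux).
  destruct Hid as (_ & Hdown & _). apply (Hdown _ _ HUB).
  intros y [Uy Ay]. split; auto.
Qed.

(* [Cl*] lies below the closure, since the complement of a closed [K ⊇ A]
   meets [A] in the empty set, which belongs to every ideal. *)
Lemma Clstar_sub_closed (A K : set X) :
  is_closed tau K -> subset A K -> subset (Clstar tau I A) K.
Proof.
  intros cK sAK x [Ax | HAx]; [auto |].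
  apply NNPP; intro nKx. apply (HAx (compl K) cK nKx).
  destruct Hid as ((B & IB) & Hdown & _). apply (Hdown _ _ IB).
  intros y [nKy Ay]. exfalso; exact (nKy (sAK y Ay)).
Qed.

Lemma closed_full : is_closed tau full.
Proof. apply open_of_nbhds. intros x nx. exfalso; apply nx; exact Logic.I. Qed.

Lemma open_locally_closed (V : set X) : tau V -> locally_closed tau V.
Proof.
  intros tV. exists V, full. repeat split; auto using closed_full.
  intros [Vx _]; exact Vx.
Qed.

Lemma pre_I_open_locally_closed_open (V : set X) :
  pre_I_open tau I V -> locally_closed tau V -> tau V.
Proof.
  intros Hpre (U & K & tU & cK & HV). apply open_of_nbhds. intros x Vx.
  destruct (Hpre x Vx) as (W & tW & sW & Wx).
  destruct Htop as (_ & _ & _ & Hinter).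
  assert (sVK : subset V K) by (intros y Vy; apply (HV y) in Vy; destruct Vy; auto).
  exists (inter U W). repeat split; auto.
  - apply (HV x) in Vx. destruct Vx; auto.
  - intros y [Uy Wy]. apply (HV y). split; auto.
    exact (Clstar_sub_closed V K cK sVK y (sW y Wy)).
Qed.

Lemma open_pre_I_open (V : set X) : tau V -> pre_I_open tau I V.
Proof. intros tV x Vx. exists V; repeat split; auto using sub_Clstar. Qed.

Lemma open_alpha_I_open (V : set X) : tau V -> alpha_I_open tau I V.
Proof.
  intros tV x Vx. apply (Int_mono (Clstar tau I V)).
  - apply Clstar_mono, open_sub_Int, tV.
  - exact (open_pre_I_open V tV x Vx).
Qed.

Lemma alpha_I_open_pre_I_open (V : set X) : alpha_I_open tau I V -> pre_I_open tau I V.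
Proof.
  intros Halpha x Vx. apply (Int_mono (Clstar tau I (Int tau V))).
  - apply Clstar_mono, Int_sub.
  - exact (Halpha x Vx).
Qed.

Lemma open_semi_I_open (V : set X) : tau V -> semi_I_open tau I V.
Proof. intros tV x Vx. left; exact (open_sub_Int V tV x Vx). Qed.

Lemma open_b_I_open (V : set X) : tau V -> b_I_open tau I V.
Proof. intros tV x Vx. left; exact (open_pre_I_open V tV x Vx). Qed.

Lemma open_iff_locally_closed (P : set X -> Prop) (V : set X) :
  (forall A, tau A -> P A) -> (forall A, P A -> pre_I_open tau I A) ->
  tau V <-> P V /\ locally_closed tau V.
Proof.
  intros HopenP HPpre. split.
  - intros tV. split; auto using open_locally_closed.
  - intros [PV lcV]. exact (pre_I_open_locally_closed_open V (HPpre V PV) lcV).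
Qed.

Section StarExtremallyDisconnected.
Hypothesis Hed : star_extremally_disconnected tau I.

Lemma Clstar_Int_sub_Int_Clstar (A : set X) :
  subset (Clstar tau I (Int tau A)) (Int tau (Clstar tau I A)).
Proof.
  intros x Hx. exists (Clstar tau I (Int tau A)). repeat split; auto.
  - apply Hed, open_Int.
  - apply Clstar_mono, Int_sub.
Qed.

Lemma semi_I_open_pre_I_open (V : set X) : semi_I_open tau I V -> pre_I_open tau I V.
Proof. intros Hsemi x Vx. exact (Clstar_Int_sub_Int_Clstar V x (Hsemi x Vx)). Qed.

Lemma b_I_open_pre_I_open (V : set X) : b_I_open tau I V -> pre_I_open tau I V.
Proof.
  intros Hb x Vx. destruct (Hb x Vx) as [Hpre | Hsemi]; auto.
  exact (Clstar_Int_sub_Int_Clstar V x Hsemi).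
Qed.

End StarExtremallyDisconnected.

Section Operation.
Variable gamma : set X -> set X.
Hypothesis Hop : is_operation tau gamma.

Lemma gamma_open_open (A : set X) : gamma_open tau gamma A -> tau A.
Proof.
  intros HA. apply open_of_nbhds. intros x Ax.
  destruct (HA x Ax) as (U & tU & Ux & sUA).
  exists U; repeat split; auto. intros y Uy. exact (sUA y (Hop U tU y Uy)).
Qed.

Lemma pre_gamma_I_open_pre_I_open (V : set X) :
  pre_gamma_I_open tau I gamma V -> pre_I_open tau I V.
Proof.
  intros Hpre x Vx. destruct (Hpre x Vx) as (U & gU & sU & Ux).
  exists U; repeat split; auto using gamma_open_open.
Qed.

Hypothesis Hreg : gamma_regular tau gamma.

Lemma open_gamma_open (A : set X) : tau A -> gamma_open tau gamma A.
Proof. intros tA x Ax. exact (Hreg x A tA Ax). Qed.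

Lemma gamma_open_iff_open (A : set X) : gamma_open tau gamma A <-> tau A.
Proof. split; auto using gamma_open_open, open_gamma_open. Qed.

Lemma open_pre_gamma_I_open (V : set X) : tau V -> pre_gamma_I_open tau I gamma V.
Proof.
  intros tV x Vx. exists V; repeat split; auto using open_gamma_open, sub_Clstar.
Qed.

End Operation.
End IdealTopology.

Theorem theorem3p35 (X : Type) (tau : set X -> Prop) (I : set X -> Prop)
  (gamma : set X -> set X)
  (Htop : is_topology tau) (Hid : is_ideal I) (Hop : is_operation tau gamma)
  (Hed : star_extremally_disconnected tau I) (Hreg : gamma_regular tau gamma)
  (V : set X) :
  (gamma_open tau gamma V <-> alpha_I_open tau I V /\ locally_closed tau V) /\
  (gamma_open tau gamma V <-> pre_gamma_I_open tau I gamma V /\ locally_closed tau V) /\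
  (gamma_open tau gamma V <-> pre_I_open tau I V /\ locally_closed tau V) /\
  (gamma_open tau gamma V <-> semi_I_open tau I V /\ locally_closed tau V) /\
  (gamma_open tau gamma V <-> b_I_open tau I V /\ locally_closed tau V).
Proof.
  rewrite (gamma_open_iff_open X tau Htop gamma Hop Hreg V).
  split; [|split; [|split; [|split]]]; apply (open_iff_locally_closed X tau I Htop Hid); auto.
  - apply open_alpha_I_open; auto.
  - apply alpha_I_open_pre_I_open; auto.
  - apply open_pre_gamma_I_open; auto.
  - apply pre_gamma_I_open_pre_I_open; auto.
  - apply open_pre_I_open.
  - apply open_semi_I_open.
  - apply semi_I_open_pre_I_open; auto.
  - apply open_b_I_open.
  - apply b_I_open_pre_I_open; auto.
Qed.
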